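(* Given $\lambda\in(0,1-q^{-1})$, $m=cm'\geq cm''s$ with $c,m',m'',s\in\mathbb{N}$ and $c>1/(1-H_q(\lambda))$, it is possible to exactly recover any $\mathbf x\in\mathcal{S}_q$ from $\mathbf y=\mathbf A\mathbf x+\mathbf n$ with probability at least $1-P_e$ if $\mathbf A=\mathbf G\mathbf A'$, where $\mathbf G$ is the generator matrix of an $[m,m',d]_q$ linear code achieving probability of error at most $P_e$ over the $q$-ary symmetric channel with crossover probability $\lambda$, and some set of $m''s$ rows of $\mathbf A'$ forms a matrix $\mathbf A''$ such that $\phi_s(\mathbf A'')$ is the parity check matrix of an $[n,n-m'',d']_{q^s}$ linear code with $d'>2b$.
   Context: Let $q$ be a prime or prime power, $\mathbb F_q$ the finite field with $q$ elements, and $b<n$ positive integers. $\mathcal S_q$ denotes the set of vectors $\mathbf x\in\mathbb F_q^n$ with at most $b$ nonzero entries (the finite alphabet of size $q$, containing $0$, is identified with $\mathbb F_q$ via a bijection sending $0$ to the zero of $\mathbb F_q$). Measurements are $\mathbf y=\mathbf A\mathbf x+\mathbf n$ with sensing matrix $\mathbf A\in\mathbb F_q^{m\times n}$, where the noise $\mathbf n\in\mathbb F_q^m$ is generated by $m$ independent uses of a $q$-ary symmetric channel with crossover probability $\lambda$: each entry equals $0$ with probability $1-\lambda$ and each nonzero $a\in\mathbb F_q$ with probability $\lambda/(q-1)$. An $[N,K,D]_q$ code is a linear code over $\mathbb F_q$ of length $N$, with $q^K$ codewords and minimum Hamming distance $D$. A linear code achieves probability of error at most $P_e$ over a channel if,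 for every codeword, the probability that a nearest-neighbor-codeword decoder decodes it erroneously (given it was sent) is at most $P_e$. $H_q(x)=-x\log_q x-(1-x)\log_q(1-x)+x\log_q(q-1)$ for $x\in(0,1)$. Field lifting: fix a primitive polynomial of degree $s$ over $\mathbb F_q$ with root $\alpha$, a primitive element of $\mathbb F_{q^s}$; for a matrix $\mathbf C=[c_{ij}]\in\mathbb F_q^{Ms\times n}$, $\phi_s(\mathbf C)=[c'_{kl}]\in\mathbb F_{q^s}^{M\times n}$ with $c'_{kl}=\sum_{t=0}^{s-1}c_{(k-1)s+t+1,l}\,\alpha^t$ (the $k$-th row combines the $s$ consecutive rows of block $k$ with weights $1,\alpha,\ldots,\alpha^{s-1}$). *)

From HB Require Import structures.
From mathcomp Require Import all_boot all_order all_algebra all_field.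
From mathcomp Require Import reals exp.
Set Implicit Arguments. Unset Strict Implicit. Unset Printing Implicit Defensive.
Import Order.TTheory GRing.Theory Num.Theory.
Local Open Scope ring_scope.

Definition hdist (K : finFieldType) (N : nat) (u v : 'cV[K]_N) : nat :=
  #|[set i | u i 0 != v i 0]|.
Definition wt (K : finFieldType) (N : nat) (u : 'cV[K]_N) : nat :=
  #|[set i | u i 0 != 0]|.

Definition is_min_dist (K : finFieldType) (N : nat) (C : {set 'cV[K]_N}) (d : nat) :=
  (forall c1 c2, c1 \in C -> c2 \in C -> c1 != c2 -> (d <= hdist c1 c2)%N) /\
  exists c1 c2, [/\ c1 \in C, c2 \in C, c1 != c2 & hdist c1 c2 = d].

(* C (of length N) is an [N, k, d]_{|K|} code: |K|^k codewords, min distance d *)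
Definition code_params (K : finFieldType) (N : nat) (C : {set 'cV[K]_N}) (k d : nat) :=
  #|C| = (#|K| ^ k)%N /\ is_min_dist C d.

Definition gen_code (K : finFieldType) (N k : nat) (G : 'M[K]_(N, k)) : {set 'cV[K]_N} :=
  [set G *m u | u : 'cV[K]_k].

Definition pc_code (K : finFieldType) (r N : nat) (H : 'M[K]_(r, N)) : {set 'cV[K]_N} :=
  [set v : 'cV[K]_N | H *m v == 0].

Definition qsc_prob (R : realType) (F : finFieldType) (M : nat) (lam : R)
  (e : 'cV[F]_M) : R :=
  \prod_(i < M) (if e i 0 == 0 then 1 - lam else lam / (#|F|.-1)%:R).
Definition qsc_P (R : realType) (F : finFieldType) (M : nat) (lam : R)
  (E : pred 'cV[F]_M) : R :=
  \sum_(e : 'cV[F]_M | E e) qsc_prob lam e.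

Definition nn_decoder (K : finFieldType) (N : nat) (C : {set 'cV[K]_N})
  (D : 'cV[K]_N -> 'cV[K]_N) :=
  forall y, D y \in C /\ forall c, c \in C -> (hdist y (D y) <= hdist y c)%N.

Definition achieves_Pe (R : realType) (F : finFieldType) (M : nat) (lam Pe : R)
  (C : {set 'cV[F]_M}) :=
  exists D, nn_decoder C D /\
    forall c, c \in C -> qsc_P lam (fun e => D (c + e) != c) <= Pe.

Definition Hq (R : realType) (q : nat) (x : R) : R :=
  - x * ln x / ln q%:R - (1 - x) * ln (1 - x) / ln q%:R
  + x * ln (q.-1)%:R / ln q%:R.

Lemma lift_idx_lt (M s : nat) (k : 'I_M) (t : 'I_s) : (k * s + t < M * s)%N.
Proof.
have ht := ltn_ord t; have hk := ltn_ord k.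
apply: (@leq_trans (k * s + s)%N); first by rewrite ltn_add2l.
by rewrite -mulSnr leq_mul2r hk orbT.
Qed.

Definition phi_s (F L : fieldType) (iota : {rmorphism F -> L}) (alpha : L)
  (M s n : nat) (C : 'M[F]_(M * s, n)) : 'M[L]_(M, n) :=
  \matrix_(k < M, l < n)
     \sum_(t < s) iota (C (Ordinal (lift_idx_lt k t)) l) * alpha ^+ t.

Definition primitive_poly_root (F L : finFieldType) (iota : {rmorphism F -> L})
  (p : {poly F}) (alpha : L) (s : nat) :=
  [/\ size p = s.+1, p \is monic, irreducible_poly p,
      root (map_poly iota p) alpha & (#|L|.-1).-primitive_root alpha].

From mathcomp Require Import all_boot all_order all_algebra all_field.
From mathcomp Require Import reals exp.
Set Implicit Arguments. Unset Strict Implicit. Unset Printing Implicit Defensive.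
Import Order.TTheory GRing.Theory Num.Theory.
Local Open Scope ring_scope.

(* Decode in two stages. The outer code generated by G corrects the channel
   noise: a nearest-neighbour decoder returns the noiseless measurement
   G (A' x) with probability at least 1 - Pe. The inner stage inverts
   x |-> G A' x on vectors of weight at most b: G is injective because the code
   has |F|^m' codewords, and if A' x = A' x' with x, x' b-sparse then the lift
   of x - x' is a codeword of the code with parity check matrix
   phi_s (rowsub f A') of weight at most 2b < d', hence x = x'.
   The rate condition on c and the primitivity of alpha only guarantee that
   such codes exist; the recovery argument does not use them. *)

Section Lifting.

Variables (F L : fieldType) (iota : {rmorphism F -> L}) (alpha : L) (M s : nat).

Lemma phi_s_mulmx n k (C : 'M[F]_(M * s, n)) (B : 'M[F]_(n, k)) :
  phi_s iota alpha C *m map_mx iota B = phi_s iota alpha (C *m B).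
Proof.
apply/matrixP => i j; rewrite !mxE.
under eq_bigr do rewrite !mxE big_distrl.
rewrite exchange_big; apply: eq_bigr => t _ /=.
rewrite !mxE rmorph_sum big_distrl; apply: eq_bigr => l _ /=.
by rewrite rmorphM mulrAC.
Qed.

Lemma phi_s0 n : phi_s iota alpha (0 : 'M[F]_(M * s, n)) = 0.
Proof.
by apply/matrixP => i j; rewrite !mxE big1 // => t _; rewrite mxE rmorph0 mul0r.
Qed.

End Lifting.

Section Hamming.

Variables (K : finFieldType) (N : nat).

Lemma hdist_subr0 (u v : 'cV[K]_N) : hdist (u - v) 0 = hdist u v.
Proof. by apply: eq_card => i; rewrite !inE !mxE subr_eq0. Qed.

Lemma hdist_map_mx (L : finFieldType) (iota : {rmorphism K -> L}) (u v : 'cV[K]_N) :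
  hdist (map_mx iota u) (map_mx iota v) = hdist u v.
Proof. by apply: eq_card => i; rewrite !inE !mxE (inj_eq (fmorph_inj iota)). Qed.

Lemma hdist_le_wtD (u v : 'cV[K]_N) : (hdist u v <= wt u + wt v)%N.
Proof.
rewrite /hdist /wt -cardsUI; apply: leq_trans (leq_addr _ _).
apply/subset_leq_card/subsetP => i; rewrite !inE.
by apply: contraR; rewrite negb_or !negbK => /andP[/eqP-> /eqP->].
Qed.

End Hamming.

Lemma gen_code_inj (K : finFieldType) (N k d : nat) (G : 'M[K]_(N, k)) :
  code_params (gen_code G) k d -> injective (@mulmx K N k 1 G).
Proof.
case=> cardG _ u v; move: cardG.
rewrite -[in X in _ = X](muln1 k) -card_mx => /eqP /imset_injP inj_on.
by apply: inj_on; rewrite inE.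
Qed.

Lemma phi_s_pc_code_sparse_inj (F L : finFieldType) (iota : {rmorphism F -> L})
    (alpha : L) (M s n k d' b : nat) (C : 'M[F]_(M * s, n)) :
  code_params (pc_code (phi_s iota alpha C)) k d' -> (2 * b < d')%N ->
  {in [pred x : 'cV[F]_n | wt x <= b]%N &, injective (mulmx C)}.
Proof.
case=> _ [min_d _] lt2bd x x' sx sx' Cxx'; apply/eqP; apply: contraTT lt2bd => neq.
set v := map_mx iota x - map_mx iota x'.
have v_code : v \in pc_code (phi_s iota alpha C).
  by rewrite inE /v -map_mxB phi_s_mulmx mulmxBr Cxx' subrr phi_s0.
have zero_code : 0 \in pc_code (phi_s iota alpha C) by rewrite inE mulmx0.
have v_neq0 : v != 0 by rewrite /v subr_eq0 (inj_eq map_mx_inj).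
have := min_d _ _ v_code zero_code v_neq0.
rewrite hdist_subr0 hdist_map_mx -leqNgt mul2n -addnn => le_d'.
rewrite !inE in sx sx'.
exact: leq_trans le_d' (leq_trans (hdist_le_wtD x x') (leq_add sx sx')).
Qed.

Lemma sum_cV_prod (R : comPzSemiRingType) (K : finType) (N : nat) (g : 'I_N -> K -> R) :
  \sum_(e : 'cV[K]_N) \prod_i g i (e i 0) = \prod_i \sum_a g i a.
Proof.
rewrite bigA_distr_bigA /= (reindex (fun h : {ffun 'I_N -> K} => \col_i h i)).
  by apply: eq_bigr => h _; apply: eq_bigr => i _; rewrite mxE.
exists (fun e : 'cV[K]_N => [ffun i => e i 0]) => [h _|e _].
  by apply/ffunP => i; rewrite ffunE mxE.
by apply/matrixP => i j; rewrite mxE ffunE ord1.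
Qed.

Section SymmetricChannel.

Variables (R : realType) (F : finFieldType) (M : nat) (lam : R).

Lemma qsc_P_predT : qsc_P lam (predT : pred 'cV[F]_M) = 1.
Proof.
rewrite /qsc_P /qsc_prob (sum_cV_prod (fun _ a => if a == 0 then 1 - lam else _)).
apply: big1 => i _; rewrite (bigD1 0) //= eqxx.
under eq_bigr => a /negbTE-> do over.
rewrite sumr_const cardC1; case: #|F| (finNzRing_gt1 F) => [|[|q]] //= _.
by rewrite -[lam / _ *+ _]mulr_natr divfK ?subrK // pnatr_eq0.
Qed.

Lemma qsc_P_predC (E : pred 'cV[F]_M) : qsc_P lam (predC E) = 1 - qsc_P lam E.
Proof.
by rewrite -qsc_P_predT /qsc_P [in RHS](bigID E) /= addrC addrK.
Qed.

Hypothesis lam_ge0 : 0 <= lam.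
Hypothesis lam_le1 : lam <= 1.

Lemma qsc_prob_ge0 (e : 'cV[F]_M) : 0 <= qsc_prob lam e.
Proof.
apply: prodr_ge0 => i _; case: ifP => _; first by rewrite subr_ge0.
by rewrite divr_ge0.
Qed.

Lemma qsc_P_sub (E E' : pred 'cV[F]_M) :
  (forall e, E e -> E' e) -> qsc_P lam E <= qsc_P lam E'.
Proof.
move=> EE'; rewrite /qsc_P [X in X <= _]big_mkcond [X in _ <= X]big_mkcond.
apply: ler_sum => e _; case: ifPn => [/EE'->|_] //.
by case: ifP => _ //; apply: qsc_prob_ge0.
Qed.

Lemma qsc_decoder_comp n (P : pred 'cV[F]_n) (A : 'M[F]_(M, n)) D (Pe : R) :
  {in P &, injective (mulmx A)} ->
  (forall x, P x -> qsc_P lam (fun e => D (A *m x + e) != A *m x) <= Pe) ->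
  exists dec : 'cV[F]_M -> 'cV[F]_n,
    forall x, P x -> 1 - Pe <= qsc_P lam (fun e => dec (A *m x + e) == x).
Proof.
move=> A_inj D_err.
exists (fun y => odflt 0 [pick x in P | A *m x == D y]) => x Px.
apply: le_trans (_ : qsc_P lam (fun e => D (A *m x + e) == A *m x) <= _).
  have := qsc_P_predC (fun e => D (A *m x + e) != A *m x).
  rewrite /qsc_P (eq_bigl _ _ (fun e => negbK _)) => ->.
  by rewrite lerD2l lerN2 D_err.
apply: qsc_P_sub => e /eqP DAx; case: pickP => [x' /andP[Px' /eqP Ax'] | /(_ x)].
  by apply/eqP/A_inj; rewrite // Ax' DAx.
have Px' : x \in P by [].
by rewrite Px' DAx eqxx.
Qed.

End SymmetricChannel.

Theorem theorem2 (R : realType) (F L : finFieldType) (iota : {rmorphism F -> L})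
  (p : {poly F}) (alpha : L) (n b m c m' m'' s d d' : nat) (lam Pe : R)
  (G : 'M[F]_(m, m')) (A' : 'M[F]_(m', n)) (f : 'I_(m'' * s) -> 'I_m') :
  (0 < b)%N -> (b < n)%N ->
  #|L| = (#|F| ^ s)%N -> primitive_poly_root iota p alpha s ->
  0 < lam -> lam < 1 - (#|F|%:R)^-1 ->
  m = (c * m')%N -> (c * (m'' * s) <= m)%N ->
  (1 - Hq #|F| lam)^-1 < c%:R ->
  code_params (gen_code G) m' d -> achieves_Pe lam Pe (gen_code G) ->
  injective f ->
  code_params (pc_code (phi_s iota alpha (rowsub f A'))) (n - m'') d' ->
  (2 * b < d')%N ->
  exists dec : 'cV[F]_m -> 'cV[F]_n,
    forall x : 'cV[F]_n, (wt x <= b)%N ->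
      1 - Pe <= qsc_P lam (fun e => dec ((G *m A') *m x + e) == x).
Proof.
move=> _ _ _ _ lam_gt0 lam_lt _ _ _ G_code [D [_ D_err]] _ pc_code_A'' lt2bd.
have lam_le1 : lam <= 1.
  by apply: le_trans (ltW lam_lt) _; rewrite lerBlDr lerDl invr_ge0 ler0n.
have G_inj := gen_code_inj G_code.
have A''_inj := phi_s_pc_code_sparse_inj pc_code_A'' lt2bd.
apply: (qsc_decoder_comp (ltW lam_gt0) lam_le1) => [x x' sx sx' | x _].
  rewrite -!mulmxA => /G_inj A'xx'; apply: A''_inj => //.
  by rewrite !mul_rowsub_mx A'xx'.
by apply: D_err; rewrite -mulmxA; apply/imsetP; exists (A' *m x).
Qed.
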